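(* For $1\le i\le r$, $C_{i,r}(a)=G_{i,r-i+2}(a)$ as polynomials in $a$.
   Context: Bernoulli polynomials $B_n(a)$: $\sum_{n\ge0}B_n(a)x^n/n!=xe^{ax}/(e^x-1)$. For $1\le i\le r$, let $S_{i,r}$ be the set of $(n_1,\dots,n_r)\in\mathbb Z_{\ge0}^r$ with $n_1+\dots+n_r=r$, $n_1+\dots+n_j<j$ ($1\le j<i$), and $n_{j+1}+\dots+n_r\le r-j$ ($i\le j<r$), and $C_{i,r}(a)=(-1)^r\sum_{(n_1,\dots,n_r)\in S_{i,r}}\prod_{j=1}^r\frac{B_{n_j}(a)}{n_j!}$. Let $L(a,t)=\sum_{n\ge1}\lambda_n(a)t^n\in\mathbb Q[a][[t]]$ be the compositional inverse (in $t$) of $e^{-at}(e^t-1)$, equivalently the unique such series with $e^{L(a,t)}(1-te^{(a-1)L(a,t)})=1$. The generalized Gregory polynomials $G_{m,n}(a)$ are defined by \[ \sum_{m,n\ge0}G_{m,n}(a)x^my^n=\frac{yL(a,-x)^2-xL(a,-y)^2}{-L(a,-x)+L(a,-y)}. \] *)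

(* Polynomials in a are {poly rat}, with a = 'X. *)
From HB Require Import structures.
From mathcomp Require Import all_boot all_order all_algebra.
Set Implicit Arguments. Unset Strict Implicit. Unset Printing Implicit Defensive.
Import Order.TTheory GRing.Theory Num.Theory.
Local Open Scope ring_scope.

Notation Qa := {poly rat}.

Definition invfact (n : nat) : Qa := ((n`!%:R : rat)^-1)%:P.

(* ---------- Bernoulli polynomials ----------
   bdiv n = B_n(a)/n!, where sum_n B_n(a) x^n/n! = x e^{ax}/(e^x-1).
   Comparing coefficients of x^(n+1) in x e^{ax} = (e^x - 1) sum_k bdiv k x^k:
     a^n/n! = sum_{k=0}^{n} bdiv k / (n+1-k)!. *)
Fixpoint bdiv_seq (n : nat) : seq Qa :=
  match n with
  | 0 => [:: 1]
  | m.+1 => let s := bdiv_seq m in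
      rcons s ('X ^+ m.+1 * invfact m.+1
               - \sum_(k < m.+1) s`_k * invfact (m.+2 - k))
  end.

Definition bdiv (n : nat) : Qa := (bdiv_seq n)`_n.
Definition bernoulli_poly (n : nat) : Qa := n`!%:R * bdiv n.

(* ---------- the set S_{i,r} and C_{i,r}(a) ----------
   (n_1,...,n_r) is encoded 0-indexed as f : 'I_r -> 'I_(r+1) (n_{j+1} = f j);
   each n_j <= r is forced by n_1+...+n_r = r. *)
Definition inS (i r : nat) (f : {ffun 'I_r -> 'I_r.+1}) : bool :=
  [&& (\sum_(k < r) nat_of_ord (f k) == r)%N,
      [forall j : 'I_r, ((1 <= j) && (j < i))%N ==>
                        (\sum_(k < r | (k < j)%N) nat_of_ord (f k) < j)%N]
    & [forall j : 'I_r, (i <= j)%N ==>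
                        (\sum_(k < r | (j <= k)%N) nat_of_ord (f k) <= r - j)%N]].

Arguments inS i r f : clear implicits.

Definition Cpoly (i r : nat) : Qa :=
  (-1) ^+ r * \sum_(f : {ffun 'I_r -> 'I_r.+1} | inS i r f)
                 \prod_(j < r) (bernoulli_poly (f j) * invfact (f j)).

Definition sdelta0 : nat -> Qa := fun n => (n == 0)%:R.
Definition smul (f g : nat -> Qa) : nat -> Qa :=
  fun n => \sum_(k < n.+1) f k * g (n - k)%N.
Fixpoint spow (f : nat -> Qa) (k : nat) : nat -> Qa :=
  match k with 0 => sdelta0 | k.+1 => smul f (spow f k) end.
(* composition f(g(t)), for g with zero constant term *)
Definition scomp (f g : nat -> Qa) : nat -> Qa :=
  fun n => \sum_(k < n.+1) f k * spow g k n.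
Definition sexp (c : Qa) : nat -> Qa := fun n => c ^+ n * invfact n.
Definition fser : nat -> Qa :=
  smul (sexp (- 'X)) (fun n => sexp 1 n - sdelta0 n).

Definition isL (L : nat -> Qa) : Prop :=
  L 0%N = 0 /\ forall n, scomp fser L n = (n == 1%N)%:R.

Definition sneg (f : nat -> Qa) : nat -> Qa := fun n => (-1) ^+ n * f n.

Definition bmul (F G : nat -> nat -> Qa) : nat -> nat -> Qa :=
  fun m n => \sum_(i < m.+1) \sum_(j < n.+1) F i j * G (m - i)%N (n - j)%N.
Definition inX (f : nat -> Qa) : nat -> nat -> Qa :=
  fun m n => if n == 0%N then f m else 0.
Definition inY (f : nat -> Qa) : nat -> nat -> Qa :=
  fun m n => if m == 0%N then f n else 0.
Definition bX : nat -> nat -> Qa := inX (fun m => (m == 1%N)%:R).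
Definition bY : nat -> nat -> Qa := inY (fun n => (n == 1%N)%:R).

(* sum_{m,n} G m n x^m y^n = (y L(a,-x)^2 - x L(a,-y)^2) / (-L(a,-x) + L(a,-y)),
   stated as: G * (L(a,-y) - L(a,-x)) = y L(a,-x)^2 - x L(a,-y)^2
   (the denominator is a nonzero element of the domain Q[a][[x,y]],
    so this determines G uniquely). *)
Definition isG (L : nat -> Qa) (G : nat -> nat -> Qa) : Prop :=
  forall m n,
    bmul G (fun p q => inY (sneg L) p q - inX (sneg L) p q) m n =
    bmul bY (inX (spow (sneg L) 2)) m n - bmul bX (inY (spow (sneg L) 2)) m n.

From HB Require Import structures.
From mathcomp Require Import all_boot all_order all_algebra.
From mathcomp Require Import zify ring.
Set Implicit Arguments. Unset Strict Implicit. Unset Printing Implicit Defensive.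
Import Order.TTheory GRing.Theory Num.Theory.
Local Open Scope ring_scope.

(* Write b_n = B_n(a)/n! and B(t) = sum_n b_n t^n.  The generating function of the Bernoulli
   polynomials says B(t) * e^{-at}(e^t - 1)/t = 1; composing with L, the inverse of
   e^{-at}(e^t - 1), gives L = t B(L), hence [t^(m+1)] L^(k+1) = sum_n b_n [t^m] L^(n+k).
   For u = L(a,-x) and v = L(a,-y) this makes G = xy sum_k b_k sum_p u^p v^(k-p), so
   G_{a+1,b+1} = (-1)^(a+b) sum_k b_k sum_p [t^a]L^p [t^b]L^(k-p).
   An element of S_{i,r} is a prefix of length i-1 whose partial sums stay below their lengths,
   one free entry, and a suffix whose tail sums stay within their lengths.  The recursion for
   the powers of L identifies the b-weighted sums over such prefixes and suffixes with
   coefficients of powers of L, and summing over the free entry gives the same double sum. *)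

Lemma sum_ord_widen0 (V : nmodType) (n1 n2 : nat) (F : nat -> V) : (n1 <= n2)%N ->
  (forall k, (n1 <= k < n2)%N -> F k = 0) ->
  \sum_(k < n1) F k = \sum_(k < n2) F k.
Proof.
move=> le12 F0; rewrite (big_ord_widen _ _ le12) [RHS](bigID (fun k : 'I_n2 => (k < n1)%N)) /=.
by rewrite [X in _ = _ + X]big1 ?addr0 // => k; rewrite -leqNgt => lek; apply: F0; rewrite lek /=.
Qed.

Lemma mul_sum_geom_diff (R : comNzRingType) n (c : nat -> R) (u v : R) :
  (\sum_(k < n) c k * \sum_(p < k.+1) u ^+ p * v ^+ (k - p)) * (v - u) =
  \sum_(k < n) c k * (v ^+ k.+1 - u ^+ k.+1).
Proof.
rewrite mulr_suml; apply: eq_bigr => k _; rewrite -mulrA subrXX [_ * (v - u)]mulrC.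
congr (_ * (_ * _)).
by apply: eq_bigr => p _; rewrite mulrC.
Qed.

Lemma sum_split_indicator u v a b x : (u <= a)%N -> (v <= b)%N ->
  (\sum_(p < x) ((u + p == a) && (v + (x - p.+1) == b)) = (u + x + v == a + b.+1))%N.
Proof.
move=> le_ua le_vb; case: (ltnP (a - u) x) => [lt_x|le_x]; last first.
  rewrite big1 => [|p _]; last by have := ltn_ord p; case: eqP; lia.
  by case: eqP; lia.
rewrite (bigD1 (Ordinal lt_x)) //= big1 => [|p /eqP ne_p]; last first.
  by case: eqP => // eq_a; case: ne_p; apply: val_inj => /=; lia.
by rewrite addn0 (_ : u + (a - u) == a)%N /=; [congr nat_of_bool; apply/eqP/eqP | apply/eqP]; lia.
Qed.

Lemma sumn_take_nth s j :
  sumn (take j s) = (\sum_(k < size s | k < j) nth 0 s k)%N.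
Proof.
elim: s j => [|x t IHt] j; first by rewrite big_ord0.
rewrite /= big_mkcond big_ord_recl /=; case: j => [|j] /=; first by rewrite big1.
by rewrite IHt big_mkcond.
Qed.

Lemma sumn_drop_nth s j :
  sumn (drop j s) = (\sum_(k < size s | j <= k) nth 0 s k)%N.
Proof.
elim: s j => [|x t IHt] j; first by rewrite big_ord0.
rewrite /= big_mkcond big_ord_recl /=; case: j => [|j] /=.
  by rewrite -{1}(drop0 t) IHt big_mkcond.
by rewrite IHt big_mkcond.
Qed.

(** * Truncated power series *)

Section Truncation.
Variable R : nzRingType.
Implicit Types (p q : {poly R}) (f : nat -> R).

Definition trunc N f : {poly R} := \poly_(i < N.+1) f i.

Definition eq_upto N p q := forall i, (i <= N)%N -> p`_i = q`_i.

Lemma coef_trunc N f i : (i <= N)%N -> (trunc N f)`_i = f i.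
Proof. by move=> le_iN; rewrite coef_poly ltnS le_iN. Qed.

Lemma eq_upto_refl N p : eq_upto N p p. Proof. by []. Qed.

Lemma eq_upto_sym N p q : eq_upto N p q -> eq_upto N q p.
Proof. by move=> epq i le_iN; rewrite epq. Qed.

Lemma eq_upto_trans N p q s : eq_upto N p q -> eq_upto N q s -> eq_upto N p s.
Proof. by move=> epq eqs i le_iN; rewrite epq ?eqs. Qed.

Lemma eq_uptoM N p p' q q' :
  eq_upto N p p' -> eq_upto N q q' -> eq_upto N (p * q) (p' * q').
Proof.
move=> ep eq i le_iN; rewrite !coefM; apply: eq_bigr => j _.
by have lt_ji := ltn_ord j; rewrite ep ?eq //; lia.
Qed.

Lemma eq_uptoX N p q k : eq_upto N p q -> eq_upto N (p ^+ k) (q ^+ k).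
Proof. by move=> epq; elim: k => // k IHk; rewrite !exprS; apply: eq_uptoM. Qed.

Lemma coefX_small p k n : p`_0 = 0 -> (n < k)%N -> (p ^+ k)`_n = 0.
Proof.
move=> p0; elim: k n => [|k IHk] n // lt_nk.
rewrite exprS coefM big1 // => -[[|j] lt_jn] _ /=; first by rewrite p0 mul0r.
by rewrite IHk ?mulr0 //; lia.
Qed.

End Truncation.

Section TruncatedComposition.
Variable R : comNzRingType.
Implicit Types (p q : {poly R}).

Lemma coef_comp_upto N p q i : q`_0 = 0 -> (i <= N)%N ->
  (p \Po q)`_i = \sum_(k < N.+1) p`_k * (q ^+ k)`_i.
Proof.
move=> q0 le_iN; rewrite comp_polyE coef_sum.
under eq_bigr do rewrite coefZ.
pose S := maxn (size p) N.+1.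
rewrite (@sum_ord_widen0 _ (size p) S (fun k => p`_k * (q ^+ k)`_i)) ?leq_maxl //; last first.
  by move=> k /andP[le_pk _]; rewrite nth_default ?mul0r.
rewrite (@sum_ord_widen0 _ N.+1 S (fun k => p`_k * (q ^+ k)`_i)) ?leq_maxr //.
by move=> k /andP[lt_Nk _]; rewrite coefX_small ?mulr0 //; lia.
Qed.

Lemma eq_upto_compl N p p' q : q`_0 = 0 ->
  eq_upto N p p' -> eq_upto N (p \Po q) (p' \Po q).
Proof.
move=> q0 ep i le_iN; rewrite !(coef_comp_upto _ q0 le_iN).
by apply: eq_bigr => k _; rewrite ep // -ltnS.
Qed.
End TruncatedComposition.

(* A series in x and y is a polynomial in x with coefficients in R[y]:
   P`_i`_j is the coefficient of x^i y^j. *)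
Section BivariateTruncation.
Variable R : nzRingType.
Implicit Types (P Q : {poly {poly R}}) (p q l : {poly R}).

Definition trunc2 N (F : nat -> nat -> R) : {poly {poly R}} :=
  \poly_(i < N.+1) \poly_(j < N.+1) F i j.

Definition eq_upto2 N P Q := forall i j, (i + j <= N)%N -> P`_i`_j = Q`_i`_j.

Definition liftx p : {poly {poly R}} := map_poly polyC p.
Definition lifty p : {poly {poly R}} := p%:P.

Lemma coef_trunc2 N F i j : (i <= N)%N -> (j <= N)%N -> (trunc2 N F)`_i`_j = F i j.
Proof. by move=> le_iN le_jN; rewrite coef_poly ltnS le_iN coef_poly ltnS le_jN. Qed.

Lemma coef_liftx p i j : (liftx p)`_i`_j = if j == 0%N then p`_i else 0.
Proof. by rewrite /liftx coef_map /= coefC. Qed.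

Lemma coef_lifty p i j : (lifty p)`_i`_j = if i == 0%N then p`_j else 0.
Proof. by rewrite /lifty coefC; case: (i == 0%N); rewrite ?coef0. Qed.

Lemma liftxX : liftx 'X = 'X.
Proof. exact: map_polyX. Qed.

Lemma liftxXn p n : liftx p ^+ n = liftx (p ^+ n).
Proof. by rewrite /liftx rmorphXn. Qed.

Lemma liftyXn p n : lifty p ^+ n = lifty (p ^+ n).
Proof. by rewrite /lifty rmorphXn. Qed.

Lemma coef_liftxM_lifty p q i j : (liftx p * lifty q)`_i`_j = p`_i * q`_j.
Proof. by rewrite coefMC coef_map /= coefCM. Qed.

Lemma trunc2B N F F' :
  trunc2 N (fun i j => F i j - F' i j) = trunc2 N F - trunc2 N F'.
Proof.
apply/polyP => i; rewrite coefB !coef_poly; case: ifP => _; last by rewrite subr0.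
by apply/polyP => j; rewrite coefB !coef_poly; case: ifP => _; rewrite ?subr0.
Qed.

Lemma eq_upto2_refl N P : eq_upto2 N P P. Proof. by []. Qed.

Lemma eq_upto2_trans N P Q S : eq_upto2 N P Q -> eq_upto2 N Q S -> eq_upto2 N P S.
Proof. by move=> ePQ eQS i j le_ijN; rewrite ePQ ?eQS. Qed.

Lemma eq_upto2B N P P' Q Q' :
  eq_upto2 N P P' -> eq_upto2 N Q Q' -> eq_upto2 N (P - Q) (P' - Q').
Proof. by move=> eP eQ i j le_ijN; rewrite !coefB eP ?eQ. Qed.

Lemma eq_upto2M N P P' Q Q' :
  eq_upto2 N P P' -> eq_upto2 N Q Q' -> eq_upto2 N (P * Q) (P' * Q').
Proof.
move=> eP eQ i j le_ijN; rewrite !coefM !coef_sum; apply: eq_bigr => k _.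
rewrite !coefM; apply: eq_bigr => k' _.
by move: (ltn_ord k) (ltn_ord k') => lt_ki lt_k'j; rewrite eP ?eQ //; lia.
Qed.

Lemma eq_upto2_liftx N p q : eq_upto N p q -> eq_upto2 N (liftx p) (liftx q).
Proof. by move=> epq i j le_ijN; rewrite !coef_liftx epq //; lia. Qed.

Lemma eq_upto2_lifty N p q : eq_upto N p q -> eq_upto2 N (lifty p) (lifty q).
Proof. by move=> epq i j le_ijN; rewrite !coef_lifty epq //; lia. Qed.

Lemma coef_mul_lift_diff P l m k :
  (P * (lifty l - liftx l))`_m`_k =
  \sum_(j < k.+1) P`_m`_j * l`_(k - j) - \sum_(i < m.+1) P`_i`_k * l`_(m - i).
Proof.
rewrite mulrBr !coefB coefMC coefM coefM coef_sum; congr (_ - _).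
by apply: eq_bigr => i _; rewrite /liftx coef_map /= coefMC.
Qed.

(* When l`_0 = 0 and l`_1 is regular, l(y) - l(x) = (y - x)(l`_1 + ...) can be cancelled:
   the coefficient of x^m y^(n+1) in the product gives P`_m`_n * l`_1 in terms of lower
   coefficients of P. *)
Section Cancellation.
Variables (N : nat) (P : {poly {poly R}}) (l : {poly R}).
Hypotheses (l0 : l`_0 = 0) (l1_reg : GRing.rreg l`_1).
Hypothesis P_den : eq_upto2 N.+1 (P * (lifty l - liftx l)) 0.

Lemma cancel_lift_diff_step m n : (m + n <= N)%N ->
  (forall m' n', (m' + n' < m + n)%N -> P`_m'`_n' = 0) ->
  ((0 < m)%N -> P`_m.-1`_n.+1 = 0) -> P`_m`_n = 0.
Proof.
move=> le_mnN P_lt P_prev; apply: l1_reg => /=; rewrite mul0r.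
have y_sum : \sum_(j < n.+2) P`_m`_j * l`_(n.+1 - j) = P`_m`_n * l`_1.
  rewrite !big_ord_recr /= subnn subSn // subnn l0 mulr0 addr0 big1 ?add0r // => j _.
  by have lt_jn := ltn_ord j; rewrite P_lt ?mul0r //; lia.
have x_sum : \sum_(i < m.+1) P`_i`_n.+1 * l`_(m - i) = 0.
  rewrite big_ord_recr /= subnn l0 mulr0 addr0; apply: big1 => i _.
  have lt_im := ltn_ord i; case: (ltnP i.+1 m) => [lt_i1m|le_mi1].
    by rewrite P_lt ?mul0r //; lia.
  have -> : nat_of_ord i = m.-1 by lia.
  by rewrite P_prev ?mul0r //; lia.
have := P_den (i := m) (j := n.+1).
by rewrite coef_mul_lift_diff y_sum x_sum subr0 !coef0; apply; lia.
Qed.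

Lemma eq_upto2_cancel_lift_diff : eq_upto2 N P 0.
Proof.
suff P0 t : (t <= N)%N -> forall m n, (m + n = t)%N -> P`_m`_n = 0.
  by move=> i j le_ijN; rewrite !coef0 (P0 (i + j)%N).
elim/ltn_ind: t => t IHt le_tN m; elim: m => [|m IHm] n sum_mn;
  apply: cancel_lift_diff_step; try lia;
  by [move=> m' n' lt; apply: (IHt (m' + n')%N); lia | move=> _; apply: IHm; lia].
Qed.

End Cancellation.
End BivariateTruncation.

Lemma smul_trunc N f g i : (i <= N)%N -> smul f g i = (trunc N f * trunc N g)`_i.
Proof.
move=> le_iN; rewrite coefM /smul; apply: eq_bigr => j _.
by have lt_ji := ltn_ord j; rewrite !coef_trunc //; lia.
Qed.

Lemma spow_trunc N f k i : (i <= N)%N -> spow f k i = (trunc N f ^+ k)`_i.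
Proof.
elim: k i => [|k IHk] i le_iN; first by rewrite expr0 coef1.
rewrite exprS coefM /= /smul; apply: eq_bigr => j _.
by have lt_ji := ltn_ord j; rewrite coef_trunc ?IHk //; lia.
Qed.

Lemma scomp_trunc N f g i : g 0%N = 0 -> (i <= N)%N ->
  scomp f g i = (trunc N f \Po trunc N g)`_i.
Proof.
move=> g0 le_iN; have tg0 : (trunc N g)`_0 = 0 by rewrite coef_trunc.
rewrite (coef_comp_upto _ tg0 le_iN) /scomp.
rewrite (@sum_ord_widen0 _ i.+1 N.+1 (fun k => f k * spow g k i)) //; last first.
  by move=> k /andP[lt_ik _]; rewrite (spow_trunc _ _ le_iN) coefX_small ?mulr0.
by apply: eq_bigr => k _; rewrite coef_trunc ?(spow_trunc _ _ le_iN) // -ltnS.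
Qed.

Lemma spow_sneg f k n : spow (sneg f) k n = (-1) ^+ n * spow f k n.
Proof.
elim: k n => [|k IHk] n.
  by rewrite /= /sdelta0; case: n => [|n]; rewrite ?expr0 ?mul1r ?mulr0.
rewrite /= /smul mulr_sumr; apply: eq_bigr => j _; rewrite IHk /sneg.
by rewrite mulrACA -exprD subnKC // -ltnS.
Qed.

Lemma bmul_trunc2 N F F' i j : (i <= N)%N -> (j <= N)%N ->
  bmul F F' i j = (trunc2 N F * trunc2 N F')`_i`_j.
Proof.
move=> le_iN le_jN; rewrite coefM coef_sum /bmul; apply: eq_bigr => k _.
rewrite coefM; apply: eq_bigr => k' _.
by move: (ltn_ord k) (ltn_ord k') => lt_ki lt_k'j; rewrite !coef_trunc2 //; lia.
Qed.

Lemma trunc2_inX N f : eq_upto2 N (trunc2 N (inX f)) (liftx (trunc N f)).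
Proof. by move=> i j le_ijN; rewrite coef_trunc2 ?coef_liftx ?coef_trunc /inX //; lia. Qed.

Lemma trunc2_inY N f : eq_upto2 N (trunc2 N (inY f)) (lifty (trunc N f)).
Proof. by move=> i j le_ijN; rewrite coef_trunc2 ?coef_lifty ?coef_trunc /inY //; lia. Qed.

(** * Sequences with bounded entries *)

Fixpoint seqs_lt (m K : nat) : seq (seq nat) :=
  if m is m'.+1 then [seq x :: s | x <- index_iota 0 K, s <- seqs_lt m' K] else [:: [::]].

Section SeqsLt.
Variable V : nmodType.
Implicit Type F : seq nat -> V.

Lemma big_seqs_lt0 K F : \sum_(s <- seqs_lt 0 K) F s = F [::].
Proof. by rewrite /= big_seq1. Qed.

Lemma big_seqs_ltS m K F :
  \sum_(s <- seqs_lt m.+1 K) F s = \sum_(x < K) \sum_(s <- seqs_lt m K) F ((x : nat) :: s).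
Proof. by rewrite /= big_allpairs_dep big_mkord. Qed.

Lemma big_seqs_lt_cat a b K F :
  \sum_(s <- seqs_lt (a + b) K) F s =
  \sum_(s1 <- seqs_lt a K) \sum_(s2 <- seqs_lt b K) F (s1 ++ s2).
Proof.
elim: a F => [|a IHa] F; first by rewrite big_seqs_lt0.
by rewrite addSn !big_seqs_ltS; apply: eq_bigr => x _; exact: IHa.
Qed.

End SeqsLt.

Lemma mem_seqs_lt m K s : (s \in seqs_lt m K) = (size s == m) && all (fun x => x < K)%N s.
Proof.
elim: m s => [|m IHm] s; first by case: s.
apply/allpairsP/idP => [[[x t] [/= x_lt t_in ->]]|].
  by move: x_lt; rewrite mem_index_iota /= eqSS => ->; rewrite -IHm.
case: s => [//|x t] /= /andP[]; rewrite eqSS => size_t /andP[x_lt t_lt].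
by exists (x, t); split => //=; [rewrite mem_index_iota | rewrite IHm size_t].
Qed.

Lemma size_seqs_lt m K s : s \in seqs_lt m K -> size s = m.
Proof. by rewrite mem_seqs_lt => /andP[/eqP]. Qed.

Lemma seqs_lt_uniq m K : uniq (seqs_lt m K).
Proof.
elim: m => [//|m IHm] /=; apply: allpairs_uniq_dep => //; first exact: iota_uniq.
by move=> [x1 t1] [x2 t2] _ _ /= [-> ->].
Qed.

Section FfunSeq.
Variables r k : nat.
Implicit Type f : {ffun 'I_r -> 'I_k.+1}.

Definition ffun_seq f : seq nat := [seq nat_of_ord (f j) | j <- enum 'I_r].

Lemma size_ffun_seq f : size (ffun_seq f) = r.
Proof. by rewrite size_map size_enum_ord. Qed.

Lemma nth_ffun_seq f (j : 'I_r) : nth 0%N (ffun_seq f) j = f j.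
Proof.
rewrite (nth_map j) ?size_enum_ord //; congr (nat_of_ord (f _)).
by apply: val_inj; rewrite /= nth_enum_ord.
Qed.

Lemma ffun_seq_inj : injective ffun_seq.
Proof. by move=> f g eq_fg; apply/ffunP => j; apply: ord_inj; rewrite -!nth_ffun_seq eq_fg. Qed.

Lemma big_ffun_seqs_lt (V : nmodType) (Phi : seq nat -> V) :
  \sum_(f : {ffun 'I_r -> 'I_k.+1}) Phi (ffun_seq f) = \sum_(s <- seqs_lt r k.+1) Phi s.
Proof.
rewrite -(big_map ffun_seq xpredT Phi); apply/perm_big/uniq_perm.
- by rewrite map_inj_uniq ?index_enum_uniq //; exact: ffun_seq_inj.
- exact: seqs_lt_uniq.
move=> s; rewrite mem_seqs_lt; apply/mapP/idP => [[f _ ->]|/andP[/eqP size_s s_lt]].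
  by rewrite size_ffun_seq eqxx; apply/allP => x /mapP [j _ ->].
exists [ffun j : 'I_r => inord (nth 0%N s j)]; first exact: mem_index_enum.
apply: (@eq_from_nth _ 0%N); first by rewrite size_ffun_seq.
move=> j; rewrite size_s => lt_jr; rewrite -[j]/(nat_of_ord (Ordinal lt_jr)) nth_ffun_seq ffunE.
by rewrite inordK // (allP s_lt) // mem_nth ?size_s.
Qed.

Lemma sum_ffun_seq f (P : pred nat) :
  (\sum_(j < r | P j) f j = \sum_(j < size (ffun_seq f) | P j) nth 0 (ffun_seq f) j)%N.
Proof.
rewrite -(big_mkord P (fun j => nth 0 (ffun_seq f) j)) size_ffun_seq big_mkord.
by apply: eq_bigr => j _; rewrite nth_ffun_seq.
Qed.

Lemma sumn_take_ffun_seq f j : sumn (take j (ffun_seq f)) = (\sum_(i < r | i < j) f i)%N.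
Proof. by rewrite sumn_take_nth (sum_ffun_seq f (fun i => i < j)%N). Qed.

Lemma sumn_drop_ffun_seq f j : sumn (drop j (ffun_seq f)) = (\sum_(i < r | j <= i) f i)%N.
Proof. by rewrite sumn_drop_nth (sum_ffun_seq f (fun i => j <= i)%N). Qed.

End FfunSeq.

Definition prefix_sums_lt (s : seq nat) : bool :=
  all (fun j => sumn (take j s) < j)%N (iota 1 (size s)).
Definition suffix_sums_le (s : seq nat) : bool :=
  all (fun j => sumn (drop j s) <= size s - j)%N (iota 0 (size s)).

Lemma prefix_sums_lt_rcons s x :
  prefix_sums_lt (rcons s x) = prefix_sums_lt s && (sumn s + x < (size s).+1)%N.
Proof.
rewrite /prefix_sums_lt size_rcons -[X in iota 1 X]addn1 iotaD all_cat /= andbT; congr (_ && _).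
  apply: eq_in_all => j; rewrite mem_iota => /andP[_ lt_j].
  by rewrite -cats1 takel_cat //; lia.
by rewrite take_oversize ?size_rcons ?sumn_rcons; [congr (_ < _)%N; lia | lia].
Qed.

Lemma prefix_sums_lt_sumn s : prefix_sums_lt s -> (sumn s <= size s)%N.
Proof.
case: (posnP (size s)) => [/size0nil -> //|size_gt0].
move/allP/(_ (size s)); rewrite mem_iota take_size size_gt0 add1n ltnSn.
by move=> /(_ isT)/ltnW.
Qed.

Lemma suffix_sums_le_cons x s :
  suffix_sums_le (x :: s) = (x + sumn s <= (size s).+1)%N && suffix_sums_le s.
Proof.
rewrite /suffix_sums_le /= subn0; congr (_ && _).
rewrite -[1%N]addn0 iotaDl all_map; apply: eq_all => j /=.
by rewrite add1n subSS.
Qed.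

Lemma suffix_sums_le_sumn s : suffix_sums_le s -> (sumn s <= size s)%N.
Proof.
by case: s => [//|x t]; rewrite suffix_sums_le_cons => /andP[sum_le _].
Qed.

Lemma prefix_sums_lt_rcons_sumn s x h m : size s = m ->
  prefix_sums_lt (rcons s x) && (sumn (rcons s x) + h == m.+1)%N =
  [&& 0 < h, prefix_sums_lt s & sumn s + (x + h.-1) == m]%N.
Proof.
move=> size_s; rewrite prefix_sums_lt_rcons sumn_rcons size_s.
by case: (prefix_sums_lt s); rewrite ?andbF //=; apply/idP/idP; case: h => [|h] /=; lia.
Qed.

Lemma suffix_sums_le_cons_sumn x s e m : size s = m ->
  suffix_sums_le (x :: s) && (sumn (x :: s) + e == m.+1)%N =
  [&& 0 < x + e, suffix_sums_le s & sumn s + (x + e).-1 == m]%N.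
Proof.
move=> size_s; rewrite suffix_sums_le_cons size_s /=.
case s_le: (suffix_sums_le s); rewrite ?andbF //=.
have := suffix_sums_le_sumn s_le; rewrite size_s => sum_le.
by apply/idP/idP; lia.
Qed.

(** * The Bernoulli series and the inverse series L *)

Lemma size_bdiv_seq n : size (bdiv_seq n) = n.+1.
Proof. by elim: n => //= n IHn; rewrite size_rcons IHn. Qed.

Lemma nth_bdiv_seq n k : (k <= n)%N -> (bdiv_seq n)`_k = bdiv k.
Proof.
elim: n k => [|n IHn] k; first by rewrite leqn0 => /eqP ->.
rewrite leq_eqVlt => /orP[/eqP -> //|lt_kn].
by rewrite /= nth_rcons size_bdiv_seq lt_kn IHn.
Qed.

Lemma bdiv0 : bdiv 0 = 1. Proof. by []. Qed.

Lemma bdivS n : bdiv n.+1 =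
  'X ^+ n.+1 * invfact n.+1 - \sum_(k < n.+1) bdiv k * invfact (n.+2 - k).
Proof.
rewrite {1}/bdiv /= nth_rcons size_bdiv_seq ltnn eqxx; congr (_ - _).
by apply: eq_bigr => k _; rewrite nth_bdiv_seq // -ltnS.
Qed.

Lemma invfact0 : invfact 0 = 1. Proof. by rewrite /invfact invr1. Qed.
Lemma invfact1 : invfact 1 = 1. Proof. by rewrite /invfact invr1. Qed.

Lemma invfact_bin n k : (k <= n)%N ->
  invfact n *+ 'C(n, k) = invfact k * invfact (n - k).
Proof.
move=> le_kn; rewrite /invfact -polyCMn -!polyCM; congr _%:P; rewrite -mulr_natr.
have /(congr1 (fun m => m%:R : rat)) := bin_fact le_kn; rewrite !natrM => fact_n.
have fact_neq0 m : (m`!%:R : rat) != 0 by rewrite pnatr_eq0 -lt0n fact_gt0.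
have bin_neq0 : ('C(n, k)%:R : rat) != 0 by rewrite pnatr_eq0 -lt0n bin_gt0.
by rewrite -fact_n; field; rewrite !fact_neq0 bin_neq0.
Qed.

Definition sexpm1_divX (n : nat) : Qa := invfact n.+1.

Lemma bdiv_sexpm1_divX N :
  eq_upto N (trunc N bdiv * trunc N sexpm1_divX) (trunc N (sexp 'X)).
Proof.
move=> n le_nN; rewrite -smul_trunc // coef_trunc // /smul /sexp /sexpm1_divX.
have -> : \sum_(k < n.+1) bdiv k * invfact (n - k).+1
        = \sum_(k < n.+1) bdiv k * invfact (n.+1 - k).
  by apply: eq_bigr => k _; rewrite subSn // -ltnS.
case: n le_nN => [|n] _; first by rewrite big_ord1 bdiv0 invfact1 invfact0 !mulr1.
by rewrite big_ord_recr /= subSn // subnn invfact1 mulr1 bdivS addrC subrK.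
Qed.

Lemma sexpD N c d :
  eq_upto N (trunc N (sexp c) * trunc N (sexp d)) (trunc N (sexp (c + d))).
Proof.
move=> n le_nN; rewrite -smul_trunc // coef_trunc // /smul /sexp addrC exprDn.
rewrite mulr_suml; apply: eq_bigr => k _; have le_kn : (k <= n)%N by rewrite -ltnS.
by rewrite mulrnAl -mulrnAr invfact_bin //; ring.
Qed.

Lemma sexp0 N : eq_upto N (trunc N (sexp 0)) 1.
Proof.
move=> n le_nN; rewrite coef_trunc // coef1 /sexp expr0n.
by case: n le_nN => [|n] _ /=; rewrite ?invfact0 ?mul1r ?mul0r.
Qed.

Definition fser_divX N : {poly Qa} := trunc N (sexp (- 'X)) * trunc N sexpm1_divX.

Lemma fser_divXE N : eq_upto N (trunc N fser) ('X * fser_divX N).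
Proof.
have sexp1_sub1 : eq_upto N (trunc N (fun n => sexp 1 n - sdelta0 n)) ('X * trunc N sexpm1_divX).
  move=> n le_nN; rewrite coef_trunc // coefXM /sexp /sdelta0 expr1n mul1r.
  case: n le_nN => [|n] lt_nN /=; first by rewrite invfact0 subrr.
  by rewrite coef_trunc ?subr0 //; lia.
move=> n le_nN; rewrite coef_trunc // /fser (smul_trunc _ _ le_nN) /fser_divX mulrCA.
exact: (eq_uptoM (eq_upto_refl _) sexp1_sub1 le_nN).
Qed.

Lemma bdiv_fser_divX N : eq_upto N (trunc N bdiv * fser_divX N) 1.
Proof.
rewrite /fser_divX mulrCA.
apply: (eq_upto_trans (q := trunc N (sexp (- 'X)) * trunc N (sexp 'X))).
  exact: (eq_uptoM (eq_upto_refl _) (@bdiv_sexpm1_divX N)).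
by apply: eq_upto_trans (@sexpD N _ _) _; rewrite addNr; apply: sexp0.
Qed.

Section InverseSeries.
Variable L : nat -> Qa.
Hypothesis L_inv : isL L.

Lemma L0 : L 0%N = 0. Proof. by case: L_inv. Qed.

Lemma coef0_truncL N : (trunc N L)`_0 = 0. Proof. by rewrite coef_trunc // L0. Qed.

(* L fser_divX(L) = X and B(L) fser_divX(L) = 1. *)
Lemma truncL_lagrange N : eq_upto N (trunc N L) ('X * (trunc N bdiv \Po trunc N L)).
Proof.
set l := trunc N L; set Bl := trunc N bdiv \Po l; have l0 := coef0_truncL N.
have lP : eq_upto N (l * (fser_divX N \Po l)) 'X.
  rewrite -[X in X * _]comp_polyX -comp_polyM => n le_nN.
  rewrite -(eq_upto_compl l0 (@fser_divXE N)) // -scomp_trunc ?L0 //.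
  by case: L_inv => _ ->; rewrite coefX.
have BlP : eq_upto N (Bl * (fser_divX N \Po l)) 1.
  rewrite -comp_polyM -[1](comp_polyC 1 l).
  exact: eq_upto_compl l0 (@bdiv_fser_divX N).
have -> : 'X * Bl = (l * (fser_divX N \Po l)) * Bl + ('X - l * (fser_divX N \Po l)) * Bl.
  by rewrite -mulrDl addrC subrK.
move=> n le_nN; rewrite coefD [X in _ + X]coefM big1 ?addr0; last first.
  by move=> j _; have lt_jn := ltn_ord j; rewrite coefB lP ?subrr ?mul0r //; lia.
by rewrite -mulrA [_ * Bl]mulrC (eq_uptoM (eq_upto_refl l) BlP) // mulr1.
Qed.

Lemma spow_small k m : (m < k)%N -> spow L k m = 0.
Proof. by move=> lt_mk; rewrite (spow_trunc (N := m)) // coefX_small // coef0_truncL. Qed.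

Lemma spow_lagrange k m :
  spow L k.+1 m.+1 = \sum_(n < m.+1) bdiv n * spow L (n + k) m.
Proof.
set N := m.+1; set l := trunc N L; have l0 := coef0_truncL N.
rewrite (spow_trunc (N := N)) // exprS.
rewrite (eq_uptoM (@truncL_lagrange N) (eq_upto_refl (l ^+ k))) // -mulrA coefXM /=.
have B_l : eq_upto N (trunc N bdiv \Po l) (\sum_(n < N.+1) bdiv n *: l ^+ n).
  move=> i le_iN; rewrite (coef_comp_upto _ l0 le_iN) coef_sum.
  by apply: eq_bigr => n _; rewrite coefZ coef_trunc // -ltnS.
rewrite (eq_uptoM B_l (eq_upto_refl (l ^+ k))) // mulr_suml coef_sum big_ord_recr /=.
rewrite -scalerAl -exprD coefZ coefX_small ?mulr0 ?addr0 ?coef0_truncL //; last by lia.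
apply: eq_bigr => n _; rewrite -scalerAl -exprD coefZ.
by rewrite (spow_trunc (N := N)) // ltnW.
Qed.

Lemma spow_lagrange_ord K k m : (m < K)%N ->
  spow L k.+1 m.+1 = \sum_(x < K) bdiv x * spow L (x + k) m.
Proof.
move=> lt_mK; rewrite spow_lagrange.
apply: (@sum_ord_widen0 _ m.+1 K (fun x => bdiv x * spow L (x + k) m)) => // x /andP[lt_mx _].
by rewrite spow_small ?mulr0 //; lia.
Qed.

Lemma L1 : L 1%N = 1.
Proof.
have := spow_lagrange 0 0; rewrite (spow_trunc (N := 1)) // expr1 coef_trunc // => ->.
by rewrite big_ord1 bdiv0 mul1r.
Qed.

(* For K large, C_{a+1,a+b+1} and G_{a+1,b+2} both equal (-1)^(a+b+1) bspow_sum K a b.+1. *)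
Definition bspow_sum K a b : Qa :=
  \sum_(k < K) bdiv k * \sum_(p < k.+1) spow L p a * spow L (k - p) b.

Lemma bspow_sum_widen K K' a b : (a + b < K)%N -> (K <= K')%N ->
  bspow_sum K a b = bspow_sum K' a b.
Proof.
move=> lt_abK le_KK'; apply: (@sum_ord_widen0 _ K K'
  (fun k => bdiv k * \sum_(p < k.+1) spow L p a * spow L (k - p) b)) => // k /andP[le_Kk _].
rewrite big1 ?mulr0 // => p _; have lt_pk := ltn_ord p.
case: (ltnP a p) => [lt_ap|le_pa]; first by rewrite spow_small ?mul0r.
by rewrite [spow L (k - p) b]spow_small ?mulr0 //; lia.
Qed.

End InverseSeries.

(** * The coefficients C_{i,r} *)

Definition bprod (s : seq nat) : Qa := \prod_(x <- s) bdiv x.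

Lemma bprod_rcons s x : bprod (rcons s x) = bprod s * bdiv x.
Proof. by rewrite /bprod -cats1 big_cat big_seq1. Qed.

Lemma bprod_cons x s : bprod (x :: s) = bdiv x * bprod s.
Proof. by rewrite /bprod big_cons. Qed.

Lemma bprod_cat s t : bprod (s ++ t) = bprod s * bprod t.
Proof. by rewrite /bprod big_cat. Qed.

Definition inS_seq (i r : nat) (s : seq nat) : bool :=
  [&& sumn s == r, all (fun j => sumn (take j s) < j)%N (iota 1 i.-1)
    & all (fun j => sumn (drop j s) <= r - j)%N (iota i (r - i))].

Lemma inS_ffun_seq i r f : (1 <= i)%N -> (i <= r)%N -> inS i r f = inS_seq i r (ffun_seq f).
Proof.
move=> le1i le_ir; rewrite /inS /inS_seq; congr [&& _, _ & _].
- rewrite -[ffun_seq f]take_size size_ffun_seq sumn_take_ffun_seq.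
  by congr (_ == _); apply: eq_bigl => j; rewrite ltn_ord.
- apply/forallP/allP => [prefix_lt j|prefix_lt j].
    rewrite mem_iota sumn_take_ffun_seq => /andP[le1j lt_ji].
    have lt_jr : (j < r)%N by lia.
    by apply: (implyP (prefix_lt (Ordinal lt_jr))) => /=; lia.
  apply/implyP => /andP[le1j lt_ji]; rewrite -sumn_take_ffun_seq.
  by apply: prefix_lt; rewrite mem_iota; lia.
- apply/forallP/allP => [suffix_le j|suffix_le j].
    rewrite mem_iota sumn_drop_ffun_seq => /andP[le_ij lt_j].
    have lt_jr : (j < r)%N by lia.
    by apply: (implyP (suffix_le (Ordinal lt_jr))).
  apply/implyP => le_ij; rewrite -sumn_drop_ffun_seq.
  by apply: suffix_le; rewrite mem_iota; have := ltn_ord j; lia.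
Qed.

Lemma prod_ffun_seq r (f : {ffun 'I_r -> 'I_r.+1}) :
  \prod_(j < r) (bernoulli_poly (f j) * invfact (f j)) = bprod (ffun_seq f).
Proof.
rewrite /bprod big_map big_enum /=; apply: eq_bigr => j _.
rewrite /bernoulli_poly /invfact mulrAC -polyC_natr -polyCM mulfV ?mul1r //.
by rewrite pnatr_eq0 -lt0n fact_gt0.
Qed.

Lemma CpolyE i r : (1 <= i)%N -> (i <= r)%N ->
  Cpoly i r = (-1) ^+ r * \sum_(s <- seqs_lt r r.+1) (inS_seq i r s)%:R * bprod s.
Proof.
move=> le1i le_ir; rewrite /Cpoly -big_ffun_seqs_lt big_mkcond /=; congr (_ * _).
apply: eq_bigr => f _; rewrite inS_ffun_seq // prod_ffun_seq.
by case: (inS_seq i r (ffun_seq f)); rewrite ?mul1r ?mul0r.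
Qed.

Section Combinatorics.
Variable L : nat -> Qa.
Hypothesis L_inv : isL L.

Definition prefix_weight K m h : Qa :=
  \sum_(s <- seqs_lt m K) (prefix_sums_lt s && (sumn s + h == m)%N)%:R * bprod s.

Definition suffix_weight K m e : Qa :=
  \sum_(s <- seqs_lt m K) (suffix_sums_le s && (sumn s + e == m)%N)%:R * bprod s.

Lemma prefix_weightE K m h : (m < K)%N -> prefix_weight K m h = spow L h m.
Proof.
elim: m h => [|m IHm] h lt_mK.
  rewrite /prefix_weight big_seqs_lt0 /bprod big_nil mulr1.
  by case: h => [|h] //; rewrite (spow_small L_inv).
rewrite /prefix_weight -addn1 big_seqs_lt_cat addn1.
under eq_big_seq => s s_in.
  rewrite big_seqs_ltS; under eq_bigr => x _ do
    rewrite big_seqs_lt0 cats1 prefix_sums_lt_rcons_sumn ?(size_seqs_lt s_in) // bprod_rcons.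
  over.
case: h => [|h].
  by rewrite big1 // => s _; rewrite big1 // => x _; rewrite mul0r.
rewrite (spow_lagrange_ord L_inv _ (ltnW lt_mK)) exchange_big /=; apply: eq_bigr => x _.
rewrite -IHm ?(ltnW lt_mK) // /prefix_weight mulr_sumr; apply: eq_bigr => s _.
by ring.
Qed.

Lemma suffix_weightE K m e : (m.+1 < K)%N -> suffix_weight K m e = spow L e.+1 m.+1.
Proof.
elim: m e => [|m IHm] e lt_mK.
  rewrite (spow_lagrange L_inv) big_ord1 bdiv0 mul1r.
  rewrite /suffix_weight big_seqs_lt0 /bprod big_nil mulr1.
  by case: e => [|e] //; rewrite (spow_small L_inv).
rewrite /suffix_weight big_seqs_ltS (spow_lagrange_ord L_inv _ (ltnW lt_mK)).
apply: eq_bigr => x _; rewrite big_seq.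
under eq_bigr => s s_in do rewrite suffix_sums_le_cons_sumn ?(size_seqs_lt s_in) // bprod_cons.
rewrite -big_seq; case: (posnP (x + e)) => [xe0|xe_gt0].
  by rewrite big1 => [|s _]; rewrite xe0 ?mul0r ?mulr0.
rewrite -(prednK xe_gt0) -IHm ?(ltnW lt_mK) // /suffix_weight mulr_sumr.
by apply: eq_bigr => s _; rewrite prednK // mulrCA.
Qed.

Lemma inS_seq_cat a b s1 x s2 : size s1 = a -> size s2 = b ->
  inS_seq a.+1 (a + b.+1) (s1 ++ x :: s2) =
  [&& sumn s1 + x + sumn s2 == a + b.+1, prefix_sums_lt s1 & suffix_sums_le s2]%N.
Proof.
move=> size_s1 size_s2; rewrite /inS_seq sumn_cat /= addnA; congr [&& _, _ & _].
  rewrite /prefix_sums_lt size_s1; apply: eq_in_all => j; rewrite mem_iota => /andP[_ lt_j].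
  by rewrite takel_cat // size_s1; lia.
rewrite /suffix_sums_le size_s2 (_ : (a + b.+1 - a.+1 = b)%N); last by lia.
rewrite -[a.+1]addn0 iotaDl all_map; apply: eq_all => j /=.
rewrite drop_cat size_s1 (_ : (a.+1 + j < a = false)%N); last by lia.
rewrite (_ : (a.+1 + j - a = j.+1)%N); last by lia.
by rewrite /= (_ : (a + b.+1 - (a.+1 + j) = b - j)%N) //; lia.
Qed.

Lemma inS_seq_cat_weight a b s1 x s2 : size s1 = a -> size s2 = b ->
  (inS_seq a.+1 (a + b.+1) (s1 ++ x :: s2))%:R * bprod (s1 ++ x :: s2) =
  \sum_(p < x) bdiv x *
    ((prefix_sums_lt s1 && (sumn s1 + p == a)%N)%:R * bprod s1 *
     ((suffix_sums_le s2 && (sumn s2 + (x - p.+1) == b)%N)%:R * bprod s2)).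
Proof.
move=> size_s1 size_s2; rewrite inS_seq_cat // bprod_cat bprod_cons.
case P1: (prefix_sums_lt s1); last first.
  by rewrite /= andbF mul0r big1 // => p _; rewrite /= !mul0r mulr0.
case P2: (suffix_sums_le s2); last first.
  by rewrite /= andbF mul0r big1 // => p _; rewrite /= !mul0r !mulr0.
have := prefix_sums_lt_sumn P1; have := suffix_sums_le_sumn P2.
rewrite size_s1 size_s2 /= andbT => le_vb le_ua.
rewrite -(sum_split_indicator x le_ua le_vb) natr_sum mulr_suml; apply: eq_bigr => p _.
by rewrite -mulnb natrM; ring.
Qed.

Lemma sum_inS_seq a b K : (a < K)%N -> (b.+1 < K)%N ->
  \sum_(s <- seqs_lt (a + b.+1) K) (inS_seq a.+1 (a + b.+1) s)%:R * bprod s =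
  bspow_sum L K a b.+1.
Proof.
move=> lt_aK lt_bK; rewrite big_seqs_lt_cat.
under eq_big_seq => s1 s1_in.
  rewrite big_seqs_ltS; under eq_bigr => x _ do under eq_big_seq => s2 s2_in do
    rewrite inS_seq_cat_weight ?(size_seqs_lt s1_in) ?(size_seqs_lt s2_in) //.
  over.
rewrite /bspow_sum exchange_big; apply: eq_bigr => x _.
rewrite big_ord_recr /= subnn mulr0 addr0 mulr_sumr.
under eq_bigr => s1 _ do rewrite exchange_big.
rewrite exchange_big; apply: eq_bigr => p _ /=.
have -> : (x - p = (x - p.+1).+1)%N by have := ltn_ord p; lia.
rewrite -(@prefix_weightE K) // -(@suffix_weightE K) // big_distrlr mulr_sumr.
by apply: eq_bigr => s1 _; rewrite mulr_sumr.
Qed.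

End Combinatorics.

(** * The series G *)

Section ClosedForm.
Variable L : nat -> Qa.
Hypothesis L_inv : isL L.

Definition ell N : {poly Qa} := trunc N (sneg L).

Lemma coef0_ell N : (ell N)`_0 = 0.
Proof. by rewrite coef_trunc // /sneg (L0 L_inv) mulr0. Qed.

Lemma coef1_ell N : (1 <= N)%N -> (ell N)`_1 = -1.
Proof. by move=> le1N; rewrite coef_trunc // /sneg (L1 L_inv) mulr1. Qed.

Lemma coef_ellX N k n : (n <= N)%N -> (ell N ^+ k)`_n = (-1) ^+ n * spow L k n.
Proof. by move=> le_nN; rewrite -(spow_trunc _ _ le_nN) spow_sneg. Qed.

Definition bdiv_ell N : {poly Qa} := \sum_(k < N.+1) (bdiv k)%:P * ell N ^+ k.

Lemma ell_lagrange N : eq_upto N (ell N) (- 'X * bdiv_ell N).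
Proof.
case=> [|n] lt_nN; first by rewrite coef0_ell mulNr coefN coefXM oppr0.
have := truncL_lagrange L_inv lt_nN; rewrite coefXM /= coef_trunc //.
rewrite (coef_comp_upto _ (coef0_truncL L_inv N) (ltnW lt_nN)) => L_n1.
rewrite coef_trunc // /sneg L_n1 mulNr coefN coefXM /= coef_sum exprS mulN1r mulr_sumr -sumrN.
apply: eq_bigr => k _; rewrite coefCM coef_trunc ?coef_ellX ?(ltnW lt_nN) //; last first.
  by have := ltn_ord k; lia.
by rewrite (spow_trunc (N := N)) ?(ltnW lt_nN) //; ring.
Qed.

(* With u = L(a,-x) and v = L(a,-y), so that u = -x B(u) and v = -y B(v),
   G = xy (v B(v) - u B(u)) / (v - u). *)
Definition Gclosed N : {poly {poly Qa}} :=
  'X * lifty 'X * \sum_(k < N.+1) (bdiv k)%:P%:P *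
    \sum_(p < k.+1) liftx (ell N) ^+ p * lifty (ell N) ^+ (k - p).

Definition Gden N : {poly {poly Qa}} := lifty (ell N) - liftx (ell N).

Definition Gnum N : {poly {poly Qa}} :=
  lifty 'X * liftx (ell N ^+ 2) - 'X * lifty (ell N ^+ 2).

Lemma Gclosed_den N : eq_upto2 N (Gclosed N * Gden N) (Gnum N).
Proof.
set B := bdiv_ell N; set w := - 'X * B; have ell_w : eq_upto N (ell N) w := @ell_lagrange N.
have -> : Gclosed N * Gden N =
    'X * lifty 'X * (lifty (ell N) * lifty B - liftx (ell N) * liftx B).
  rewrite /Gclosed /Gden -!mulrA.
  have /= -> := mul_sum_geom_diff N.+1 (fun k => (bdiv k)%:P%:P)
    (liftx (ell N)) (lifty (ell N)).
  rewrite /B /bdiv_ell /liftx /lifty !rmorph_sum; congr (_ * (_ * _)).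
  rewrite !mulr_sumr -sumrB; apply: eq_bigr => k _.
  by rewrite !rmorphM !rmorphXn /= map_polyC /= !exprS; ring.
have w_closed : 'X * lifty 'X * (lifty w * lifty B - liftx w * liftx B) =
    lifty 'X * liftx (w ^+ 2) - 'X * lifty (w ^+ 2).
  by rewrite /w /liftx /lifty !rmorphXn !rmorphM !rmorphN /= map_polyX; ring.
apply: (eq_upto2_trans (Q := lifty 'X * liftx (w ^+ 2) - 'X * lifty (w ^+ 2))).
  rewrite -w_closed; apply: eq_upto2M => //; apply: eq_upto2B; apply: eq_upto2M => //.
    exact: eq_upto2_lifty ell_w.
  exact: eq_upto2_liftx ell_w.
by apply: eq_upto2B; apply: eq_upto2M => //;
  [apply: eq_upto2_liftx | apply: eq_upto2_lifty]; apply/eq_uptoX/eq_upto_sym.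
Qed.

Lemma coef_Gclosed N i j : (i < N)%N -> (j < N)%N ->
  (Gclosed N)`_i.+1`_j.+1 = (-1) ^+ (i + j) * bspow_sum L N.+1 i j.
Proof.
move=> lt_iN lt_jN; rewrite /Gclosed -mulrA coefXM /= coefCM coefXM /= !coef_sum mulr_sumr.
apply: eq_bigr => k _; rewrite coefCM coefCM !coef_sum [RHS]mulrCA [in RHS]mulr_sumr; congr (_ * _).
apply: eq_bigr => p _; rewrite liftxXn liftyXn coef_liftxM_lifty.
by rewrite !coef_ellX ?(ltnW lt_iN) ?(ltnW lt_jN) // exprD; ring.
Qed.

End ClosedForm.

Section GSide.
Variables (L : nat -> Qa) (G : nat -> nat -> Qa).
Hypotheses (L_inv : isL L) (G_eq : isG L G).

Lemma truncG_den N : (1 <= N)%N -> eq_upto2 N (trunc2 N G * Gden L N) (Gnum L N).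
Proof.
move=> le1N i j le_ijN.
have trunc_delta1 : eq_upto N (trunc N (fun m => (m == 1%N)%:R : Qa)) 'X.
  by move=> n le_nN; rewrite coef_trunc // coefX.
have ell2 : eq_upto N (trunc N (spow (sneg L) 2)) (ell L N ^+ 2).
  by move=> n le_nN; rewrite coef_trunc // (spow_trunc _ _ le_nN).
have den : eq_upto2 N (trunc2 N (fun p q => inY (sneg L) p q - inX (sneg L) p q)) (Gden L N).
  by rewrite trunc2B; apply: eq_upto2B; [apply: trunc2_inY | apply: trunc2_inX].
have num : eq_upto2 N (trunc2 N bY * trunc2 N (inX (spow (sneg L) 2))
                       - trunc2 N bX * trunc2 N (inY (spow (sneg L) 2))) (Gnum L N).
  apply: eq_upto2B; apply: eq_upto2M.
  - exact (eq_upto2_trans (@trunc2_inY N _) (eq_upto2_lifty trunc_delta1)).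
  - exact (eq_upto2_trans (@trunc2_inX N _) (eq_upto2_liftx ell2)).
  - rewrite -liftxX.
    exact (eq_upto2_trans (@trunc2_inX N _) (eq_upto2_liftx trunc_delta1)).
  - exact (eq_upto2_trans (@trunc2_inY N _) (eq_upto2_lifty ell2)).
rewrite -(eq_upto2M (@eq_upto2_refl _ N (trunc2 N G)) den le_ijN) -num // coefB coefB.
by rewrite -!bmul_trunc2 //; try lia; apply: G_eq.
Qed.

Lemma G_Gclosed N i j : (i + j <= N)%N -> G i j = (Gclosed L N.+1)`_i`_j.
Proof.
move=> le_ijN.
have diff0 : eq_upto2 N.+1 ((trunc2 N.+1 G - Gclosed L N.+1) * Gden L N.+1) 0.
  move=> m n le_mnN; rewrite mulrBl coefB coefB (truncG_den _ le_mnN) //.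
  by rewrite (Gclosed_den L_inv le_mnN) subrr !coef0.
have ell1_reg : GRing.rreg (ell L N.+1)`_1 by rewrite coef1_ell //; apply/rregN/rreg1.
have := eq_upto2_cancel_lift_diff (coef0_ell L_inv _) ell1_reg diff0 le_ijN.
by rewrite !coefB !coef0 coef_trunc2 => [/subr0_eq //||]; lia.
Qed.

End GSide.

Theorem theorem6p4 (L : nat -> {poly rat}) (G : nat -> nat -> {poly rat}) :
  isL L -> isG L G ->
  forall i r : nat, (1 <= i)%N -> (i <= r)%N ->
    Cpoly i r = G i (r - i + 2)%N.
Proof.
move=> L_inv G_eq i r le1i le_ir.
have [a def_i] : exists a, i = a.+1 by exists i.-1; lia.
have [b def_r] : exists b, r = (a + b.+1)%N by exists (r - i)%N; lia.
have -> : (r - i + 2 = b.+2)%N by lia.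
rewrite def_i def_r CpolyE ?(sum_inS_seq L_inv); try lia.
rewrite (G_Gclosed L_inv G_eq (N := a.+1 + b.+2)) // coef_Gclosed; try lia.
by rewrite (bspow_sum_widen L_inv (K' := (a.+1 + b.+2).+2)) //; lia.
Qed.
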